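(* Consider the single-element, single-slab periodic space-time SBP scheme: unknowns $\boldsymbol\rho,\boldsymbol g_1,\dots,\boldsymbol g_{n_v}\in\mathbb R^{(n_t+1)(n_x+1)}$ satisfying $$\mathsf D_t\boldsymbol\rho+\tilde{\mathsf D}_x\langle v\boldsymbol g\rangle=-\sigma_a\boldsymbol\rho-\mathsf H_t^{-1}\mathsf t_B\mathsf t_B^\top(\boldsymbol\rho-\boldsymbol\rho(0)),$$ $$\mathsf D_t\boldsymbol g_k+\tfrac{v_k}{\varepsilon}\tilde{\mathsf D}_x\boldsymbol g_k-\tfrac1\varepsilon\langle v\tilde{\mathsf D}_x\boldsymbol g\rangle+\tfrac{v_k}{\varepsilon^2}\tilde{\mathsf D}_x\boldsymbol\rho=-\Big(\tfrac{\sigma_s}{\varepsilon^2}+\sigma_a\Big)\boldsymbol g_k-\mathsf H_t^{-1}\mathsf t_B\mathsf t_B^\top(\boldsymbol g_k-\boldsymbol g_k(0)),\quad k=1,\dots,n_v,$$ with initial data satisfying $\langle\boldsymbol g(0)\rangle=0$. Then the scheme is stable: every solution satisfies $$\tfrac12\boldsymbol\rho^\top(\bar{\boldsymbol t}_T\bar{\boldsymbol t}_T^\top\otimes\bar{\mathsf H}_x)\boldsymbol\rho+\tfrac{\varepsilon^2}2\langle\boldsymbol g^\top(\bar{\boldsymbol t}_T\bar{\boldsymbol t}_T^\top\otimes\bar{\mathsf H}_x)\boldsymbol g\rangle\le\tfrac12\boldsymbol\rho(0)^\top(\bar{\boldsymbol t}_B\bar{\boldsymbol t}_B^\top\otimes\bar{\mathsf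 H}_x)\boldsymbol\rho(0)+\tfrac{\varepsilon^2}2\langle\boldsymbol g(0)^\top(\bar{\boldsymbol t}_B\bar{\boldsymbol t}_B^\top\otimes\bar{\mathsf H}_x)\boldsymbol g(0)\rangle,$$ i.e. the discrete energy at the final time is bounded by the discrete energy of the initial data.
   Context: SBP operators: on nodes $x_0<\dots<x_n$, a matrix $\bar{\mathsf D}$ is a degree-$p$ SBP approximation of $d/dx$ if $\bar{\mathsf D}\boldsymbol x^k=k\boldsymbol x^{k-1}$ for $0\le k\le p$, $\bar{\mathsf D}=\bar{\mathsf H}^{-1}\bar{\mathsf Q}$ with $\bar{\mathsf H}$ diagonal symmetric positive definite, and $\bar{\mathsf Q}+\bar{\mathsf Q}^\top=\bar{\boldsymbol t}_R\bar{\boldsymbol t}_R^\top-\bar{\boldsymbol t}_L\bar{\boldsymbol t}_L^\top=\mathrm{diag}(-1,0,\dots,0,1)$, $\bar{\boldsymbol t}_L=(1,0,\dots,0)^\top$, $\bar{\boldsymbol t}_R=(0,\dots,0,1)^\top$. Let $\bar{\mathsf D}_x=\bar{\mathsf H}_x^{-1}\bar{\mathsf Q}_x$ be such an operator on $n_x+1$ spatial nodes and $\bar{\mathsf D}_t=\bar{\mathsf H}_t^{-1}\bar{\mathsf Q}_t$ one on $n_t+1$ temporal nodes with $\bar{\boldsymbol t}_B=(1,0,\dots,0)^\top$, $\bar{\boldsymbol t}_T=(0,\dots,0,1)^\top$. With identities $\mathsf I_{n_x},\mathsf I_{n_t}$ of sizes $n_x+1,n_t+1$: $\mathsf D_t=\bar{\mathsf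 D}_t\otimes\mathsf I_{n_x}$, $\mathsf D_x=\mathsf I_{n_t}\otimes\bar{\mathsf D}_x$, $\mathsf H_t=\bar{\mathsf H}_t\otimes\mathsf I_{n_x}$, $\mathsf H_x=\mathsf I_{n_t}\otimes\bar{\mathsf H}_x$, $\mathsf t_R=\mathsf I_{n_t}\otimes\bar{\boldsymbol t}_R$, $\mathsf t_L=\mathsf I_{n_t}\otimes\bar{\boldsymbol t}_L$, $\mathsf t_B=\bar{\boldsymbol t}_B\otimes\mathsf I_{n_x}$. Periodic operator: $\tilde{\mathsf D}_x=\mathsf D_x-\frac12\mathsf H_x^{-1}\big(\mathsf t_R(\mathsf t_R^\top-\mathsf t_L^\top)-\mathsf t_L(\mathsf t_L^\top-\mathsf t_R^\top)\big)$. Velocity nodes $v_k$ and weights $\omega_k$, $k=1,\dots,n_v$, with $\sum_k\omega_k=1$, $\sum_k\omega_kv_k=0$; $\langle\boldsymbol a\rangle=\sum_k\omega_k\boldsymbol a_k$ for $k$-indexed vectors or scalars (e.g. $\langle\boldsymbol g^\top M\boldsymbol g\rangle=\sum_k\omega_k\boldsymbol g_k^\top M\boldsymbol g_k$). Parameters $\varepsilon>0$, $\sigma_s>0$, $\sigma_a\ge0$. $\boldsymbol\rho(0),\boldsymbol g_k(0)$ are given initial-data vectors. *)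

(* Kronecker product = tensmx (A *t B) from mathcomp real_closed/mxtens:
   (A *t B) (i1*p+i2) (j1*q+j2) = A i1 j1 * B i2 j2  (standard Kronecker ordering). *)
From HB Require Import structures.
From mathcomp Require Import all_boot all_order all_algebra.
From mathcomp Require Export mxtens.
Set Implicit Arguments. Unset Strict Implicit. Unset Printing Implicit Defensive.
Import Order.TTheory GRing.Theory Num.Theory.
Local Open Scope ring_scope.

Definition tfirst (R : pzRingType) (n : nat) : 'cV[R]_n.+1 :=
  \col_i (if i == ord0 then 1 else 0).
Definition tlast (R : pzRingType) (n : nat) : 'cV[R]_n.+1 :=
  \col_i (if i == ord_max then 1 else 0).

Definition nodepow (R : pzRingType) (n : nat) (x : 'cV[R]_n.+1) (k : nat) : 'cV[R]_n.+1 :=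
  \col_i (x i 0 ^+ k).

Definition is_SBP (R : realFieldType) (n p : nat) (x : 'cV[R]_n.+1)
  (D H Q : 'M[R]_n.+1) : Prop :=
  [/\ (forall i j : 'I_n.+1, (i < j)%N -> x i 0 < x j 0),
      (forall k, (k <= p)%N -> D *m nodepow x k = k%:R *: nodepow x k.-1),
      is_diag_mx H /\ (forall i, 0 < H i i),
      D = invmx H *m Q &
      Q + Q^T = tlast R n *m (tlast R n)^T - tfirst R n *m (tfirst R n)^T].

Definition vavg (R : pzRingType) (nv N : nat) (w : 'I_nv -> R) (a : 'I_nv -> 'cV[R]_N)
  : 'cV[R]_N := \sum_(k < nv) w k *: a k.

Definition qform (R : pzRingType) (N : nat) (M : 'M[R]_N) (u : 'cV[R]_N) : R :=
  ((u^T *m M *m u) 0 0).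

From HB Require Import structures.
From mathcomp Require Import all_boot all_order all_algebra.
From mathcomp Require Import mxtens.
From mathcomp Require Import ring lra.
Set Implicit Arguments. Unset Strict Implicit. Unset Printing Implicit Defensive.
Import Order.TTheory GRing.Theory Num.Theory.
Local Open Scope ring_scope.

(* With H = H_t (x) H_x, pair the rho-equation with rho^T H and
   the k-th kinetic equation with eps^2 w_k g_k^T H.  Summation by parts in time
   turns H D_t into half the difference of the final and initial boundary
   energies E_T, E_B; the SAT term contributes the nonnegative
   |u - u(0)|^2_{E_B} / 2, and absorption and scattering are dissipative.  The
   periodic SAT makes H D~_x skew-symmetric, so the streaming term of each g_k
   drops out and the couplings <v g>^T H D~_x rho of the two equations cancel.
   The last coupling, eps <g>^T H D~_x <v g>, vanishes because <g> = 0: since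
   sum w = 1, sum w v = 0 and <g(0)> = 0, the average <g> solves the homogeneous
   damped problem with zero data, whose energy identity forces <g> = 0. *)

Section Kronecker.
Variable R : pzRingType.

Lemma tensmxBl m n p q (A B : 'M[R]_(m, n)) (C : 'M[R]_(p, q)) :
  (A - B) *t C = A *t C - B *t C.
Proof. by apply/matrixP => i j; rewrite !mxE mulrBl. Qed.

Lemma tensmxBr m n p q (A : 'M[R]_(m, n)) (B C : 'M[R]_(p, q)) :
  A *t (B - C) = A *t B - A *t C.
Proof. by apply/matrixP => i j; rewrite !mxE mulrBr. Qed.

Lemma tensmxDl m n p q (A B : 'M[R]_(m, n)) (C : 'M[R]_(p, q)) :
  (A + B) *t C = A *t C + B *t C.
Proof. by apply/matrixP => i j; rewrite !mxE mulrDl. Qed.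

Lemma tensmx_is_diag m n (A : 'M[R]_m) (B : 'M[R]_n) :
  is_diag_mx A -> is_diag_mx B -> is_diag_mx (A *t B).
Proof.
move=> /is_diag_mxP dA /is_diag_mxP dB; apply/is_diag_mxP => i j.
case: (mxtens_indexP i) => i1 i2; case: (mxtens_indexP j) => j1 j2.
rewrite tensmxE; have [<-|] := eqVneq i1 j1; last by move=> ? _; rewrite dA ?mul0r.
have [<-|] := eqVneq i2 j2; last by move=> ? _; rewrite dB ?mulr0.
by rewrite eqxx.
Qed.

Lemma tensmx_skew m n (A : 'M[R]_m) (B : 'M[R]_n) :
  A^T = A -> B^T = - B -> (A *t B)^T = - (A *t B).
Proof.
move=> symA skB; rewrite trmx_tens symA skB.
by apply/matrixP => i j; rewrite !mxE mulrN.
Qed.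

End Kronecker.

Lemma tensmxZr (R : comPzRingType) m n p q (A : 'M[R]_(m, n)) c (B : 'M[R]_(p, q)) :
  A *t (c *: B) = c *: (A *t B).
Proof. by apply/matrixP => i j; rewrite !mxE mulrCA. Qed.

Lemma tfirst_outer (R : pzRingType) n : tfirst R n *m (tfirst R n)^T = delta_mx 0 0.
Proof.
have -> : tfirst R n = delta_mx 0 0.
  by apply/matrixP => i j; rewrite !mxE ord1 eqxx andbT; case: eqP.
by rewrite trmx_delta mul_delta_mx.
Qed.

Lemma tlast_outer (R : pzRingType) n :
  tlast R n *m (tlast R n)^T = delta_mx ord_max ord_max.
Proof.
have -> : tlast R n = delta_mx ord_max 0.
  by apply/matrixP => i j; rewrite !mxE ord1 eqxx andbT; case: eqP.
by rewrite trmx_delta mul_delta_mx.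
Qed.

Section PositiveDiagonal.
Variable R : realFieldType.

Definition nonneg_diag n (A : 'M[R]_n) := is_diag_mx A /\ forall i, 0 <= A i i.
Definition pos_diag n (A : 'M[R]_n) := is_diag_mx A /\ forall i, 0 < A i i.

Lemma pos_diag_nonneg n (A : 'M[R]_n) : pos_diag A -> nonneg_diag A.
Proof. by case=> dA pA; split=> // i; apply: ltW. Qed.

Lemma diag_trmx n (A : 'M[R]_n) : is_diag_mx A -> A^T = A.
Proof. by case/diag_mxP => d ->; rewrite tr_diag_mx. Qed.

Lemma pos_diag_unitmx n (A : 'M[R]_n) : pos_diag A -> A \in unitmx.
Proof.
case=> /is_diag_mx_is_trig tA pA; rewrite unitmxE det_trig // unitfE.
by apply/prodf_neq0 => i _; apply: lt0r_neq0.
Qed.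

Lemma nonneg_diag_delta n (i : 'I_n) : nonneg_diag (delta_mx i i).
Proof.
split=> [|j]; last by rewrite mxE ler0n.
apply/is_diag_mxP => j k jk; rewrite mxE.
by case: eqP => [ji|//]; case: eqP => [ki|//]; rewrite ji ki eqxx in jk.
Qed.

Lemma tensmx_nonneg_diag m n (A : 'M[R]_m) (B : 'M[R]_n) :
  nonneg_diag A -> nonneg_diag B -> nonneg_diag (A *t B).
Proof.
case=> dA pA [dB pB]; split=> [|i]; first exact: tensmx_is_diag.
by case: (mxtens_indexP i) => i1 i2; rewrite tensmxE mulr_ge0.
Qed.

Lemma tensmx_pos_diag m n (A : 'M[R]_m) (B : 'M[R]_n) :
  pos_diag A -> pos_diag B -> pos_diag (A *t B).
Proof.
case=> dA pA [dB pB]; split=> [|i]; first exact: tensmx_is_diag.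
by case: (mxtens_indexP i) => i1 i2; rewrite tensmxE mulr_gt0.
Qed.

Lemma qform_diag n (A : 'M[R]_n) u :
  is_diag_mx A -> qform A u = \sum_i A i i * u i 0 ^+ 2.
Proof.
move=> /is_diag_mxP dA; rewrite /qform mxE; apply: eq_bigr => j _.
rewrite mxE (bigD1 j) //= big1 ?addr0 => [|i ij]; last first.
  by rewrite dA ?mulr0 // eq_sym.
by rewrite mxE; ring.
Qed.

Lemma nonneg_diag_qform_ge0 n (A : 'M[R]_n) : nonneg_diag A -> forall u, 0 <= qform A u.
Proof.
by case=> dA pA u; rewrite qform_diag //; apply: sumr_ge0 => i _; rewrite mulr_ge0 ?sqr_ge0.
Qed.

Lemma pos_diag_qform_eq0 n (A : 'M[R]_n) : pos_diag A -> forall u, qform A u = 0 -> u = 0.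
Proof.
case=> dA pA u; rewrite qform_diag // => /eqP; rewrite psumr_eq0 => [/allP u0|i _]; last first.
  by rewrite mulr_ge0 ?sqr_ge0 ?ltW.
apply/matrixP => i j; rewrite ord1 mxE; apply/eqP.
by have := u0 i (mem_index_enum i); rewrite mulf_eq0 (gt_eqF (pA i)) sqrf_eq0.
Qed.

End PositiveDiagonal.

Section BilinearForm.
Variable R : comPzRingType.

Definition bform n (B : 'M[R]_n) (u z : 'cV[R]_n) : R := (u^T *m B *m z) 0 0.

Lemma qformE n (B : 'M[R]_n) u : qform B u = bform B u u.
Proof. by []. Qed.

Lemma bform_tr n (B : 'M[R]_n) u z : bform B^T u z = bform B z u.
Proof.
rewrite /bform; have -> : u^T *m B^T *m z = (z^T *m B *m u)^T.
  by rewrite !trmx_mul trmxK mulmxA.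
by rewrite mxE.
Qed.

Lemma bformDr n (B : 'M[R]_n) u z1 z2 : bform B u (z1 + z2) = bform B u z1 + bform B u z2.
Proof. by rewrite /bform mulmxDr mxE. Qed.

Lemma bformNr n (B : 'M[R]_n) u z : bform B u (- z) = - bform B u z.
Proof. by rewrite /bform mulmxN mxE. Qed.

Lemma bformBr n (B : 'M[R]_n) u z1 z2 : bform B u (z1 - z2) = bform B u z1 - bform B u z2.
Proof. by rewrite bformDr bformNr. Qed.

Lemma bformZr n (B : 'M[R]_n) u c z : bform B u (c *: z) = c * bform B u z.
Proof. by rewrite /bform -scalemxAr mxE. Qed.

Lemma bformMr n (B C : 'M[R]_n) u z : bform B u (C *m z) = bform (B *m C) u z.
Proof. by rewrite /bform !mulmxA. Qed.

Lemma bformDm n (B C : 'M[R]_n) u z : bform (B + C) u z = bform B u z + bform C u z.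
Proof. by rewrite /bform mulmxDr mulmxDl mxE. Qed.

Lemma bformNm n (B : 'M[R]_n) u z : bform (- B) u z = - bform B u z.
Proof. by rewrite /bform mulmxN mulNmx mxE. Qed.

Lemma bformBm n (B C : 'M[R]_n) u z : bform (B - C) u z = bform B u z - bform C u z.
Proof. by rewrite bformDm bformNm. Qed.

Lemma bformBl n (B : 'M[R]_n) u1 u2 z : bform B (u1 - u2) z = bform B u1 z - bform B u2 z.
Proof. by rewrite -!(bform_tr B z) bformBr. Qed.

Lemma bformZl n (B : 'M[R]_n) c u z : bform B (c *: u) z = c * bform B u z.
Proof. by rewrite -!(bform_tr B z) bformZr. Qed.

Lemma bform0r n (B : 'M[R]_n) u : bform B u 0 = 0.
Proof. by rewrite -(scale0r 0) bformZr mul0r. Qed.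

Lemma bform0l n (B : 'M[R]_n) z : bform B 0 z = 0.
Proof. by rewrite -bform_tr bform0r. Qed.

Lemma bform_skew n (S : 'M[R]_n) u z : S^T = - S -> bform S u z = - bform S z u.
Proof. by move=> skS; rewrite -bform_tr skS bformNm. Qed.

Lemma bform_vavgl n nv (B : 'M[R]_n) w (F : 'I_nv -> 'cV[R]_n) z :
  bform B (vavg w F) z = \sum_k w k * bform B (F k) z.
Proof.
rewrite -bform_tr /bform /vavg mulmx_sumr summxE; apply: eq_bigr => k _.
by rewrite -scalemxAr mxE; congr (_ * _); apply: bform_tr.
Qed.

End BilinearForm.

Section VelocityAverage.
Variables (R : comPzRingType) (nv n : nat) (w : 'I_nv -> R).
Implicit Types (F G : 'I_nv -> 'cV[R]_n) (X : 'cV[R]_n).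

Lemma vavgD F G : vavg w (fun k => F k + G k) = vavg w F + vavg w G.
Proof. by rewrite -big_split; apply: eq_bigr => k _; rewrite scalerDr. Qed.

Lemma vavgN F : vavg w (fun k => - F k) = - vavg w F.
Proof. by rewrite /vavg -sumrN; apply: eq_bigr => k _; rewrite scalerN. Qed.

Lemma vavgB F G : vavg w (fun k => F k - G k) = vavg w F - vavg w G.
Proof. by rewrite vavgD vavgN. Qed.

Lemma vavgZ c F : vavg w (fun k => c *: F k) = c *: vavg w F.
Proof. by rewrite /vavg scaler_sumr; apply: eq_bigr => k _; rewrite !scalerA mulrC. Qed.

Lemma vavg_mulmx (B : 'M[R]_n) F : vavg w (fun k => B *m F k) = B *m vavg w F.
Proof. by rewrite /vavg mulmx_sumr; apply: eq_bigr => k _; rewrite scalemxAr. Qed.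

Lemma vavg_scale (a : 'I_nv -> R) X :
  vavg w (fun k => a k *: X) = (\sum_k w k * a k) *: X.
Proof. by rewrite /vavg scaler_suml; apply: eq_bigr => k _; rewrite scalerA. Qed.

End VelocityAverage.

Section PeriodicSBP.
Variables (R : realFieldType) (n : nat) (eL eR : 'cV[R]_n).

(* H_x D~_x, the periodic operator of the paper scaled by H_x, for eL = t_L and eR = t_R. *)
Definition periodicQ (Q : 'M[R]_n) : 'M[R]_n :=
  Q - (1 / 2) *: (eR *m (eR^T - eL^T) - eL *m (eL^T - eR^T)).

Lemma periodicQ_skew Q :
  Q + Q^T = eR *m eR^T - eL *m eL^T -> (periodicQ Q)^T = - periodicQ Q.
Proof.
move=> /matrixP bndQ; apply/matrixP => i j.
have := bndQ i j; have := bndQ j i.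
rewrite /periodicQ !mxE !big_ord1 !mxE.
lra.
Qed.

End PeriodicSBP.

Lemma tensmx_periodic_Dx (R : realFieldType) m n (eL eR : 'cV[R]_n.+1)
    (H Q D : 'M[R]_n.+1) (Ht : 'M[R]_m.+1) :
  H \in unitmx -> D = invmx H *m Q ->
  (Ht *t H) *m (1%:M *t D - (1 / 2) *: (invmx (1%:M *t H) *m
     ((1%:M *t eR) *m ((1%:M *t eR)^T - (1%:M *t eL)^T)
      - (1%:M *t eL) *m ((1%:M *t eL)^T - (1%:M *t eR)^T))))
  = Ht *t periodicQ eL eR Q.
Proof.
move=> uH defD.
have HD : (Ht *t H) *m (1%:M *t D) = Ht *t Q by rewrite tensmx_mul mulmx1 defD mulKVmx.
have HHinv : (Ht *t H) *m invmx (1%:M *t H) = Ht *t 1%:M.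
  have -> : Ht *t H = (Ht *t 1%:M) *m (1%:M *t H) by rewrite tensmx_mul mulmx1 mul1mx.
  by rewrite mulmxK // tensmx_unit ?unitmx1.
rewrite mulmxBr -scalemxAr mulmxA HD HHinv !trmx_tens !trmx1 -!tensmxBr.
by rewrite !tensmx_mul !mul1mx -tensmxBr tensmx_mul mulmx1 mul1mx -tensmxZr -tensmxBr.
Qed.

Lemma tensmx_time_SBP (R : fieldType) m n (H Q D : 'M[R]_m) (Hx : 'M[R]_n) :
  H \in unitmx -> D = invmx H *m Q -> Hx^T = Hx ->
  (H *t Hx) *m (D *t 1%:M) + ((H *t Hx) *m (D *t 1%:M))^T = (Q + Q^T) *t Hx.
Proof.
move=> uH defD symHx.
by rewrite tensmx_mul mulmx1 defD mulKVmx // trmx_tens symHx -tensmxDl.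
Qed.

Lemma tensmx_time_SAT (R : fieldType) m n (H : 'M[R]_m.+1) (Hx : 'M[R]_n.+1) (e : 'cV[R]_m.+1) :
  H \in unitmx ->
  (H *t Hx) *m (invmx (H *t 1%:M) *m ((e *t 1%:M) *m (e *t 1%:M)^T)) = (e *m e^T) *t Hx.
Proof.
move=> uH; have -> : H *t Hx = (1%:M *t Hx) *m (H *t 1%:M).
  by rewrite tensmx_mul mul1mx mulmx1.
rewrite mulmxA mulmxK ?tensmx_unit ?unitmx1 // trmx_tens trmx1 !tensmx_mul.
by rewrite mulmx1 mul1mx mulmx1.
Qed.

(* M stands for H_t (x) H_x, K for the SAT H_t^-1 t_B t_B^T and Dxt for D~_x. *)
Section EnergyMethod.
Context {R : realFieldType} {N : nat} {M Dt Dxt K ET EB : 'M[R]_N}.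
Hypotheses (Dt_SBP : M *m Dt + (M *m Dt)^T = ET - EB) (K_SAT : M *m K = EB)
  (EB_sym : EB^T = EB) (Dxt_skew : (M *m Dxt)^T = - (M *m Dxt)).
Hypotheses (M_ge0 : forall u, 0 <= qform M u) (M_definite : forall u, qform M u = 0 -> u = 0)
  (ET_ge0 : forall u, 0 <= qform ET u) (EB_ge0 : forall u, 0 <= qform EB u).
Implicit Types (c : R) (u r : 'cV[R]_N).

Lemma energy_identity c u u0 r :
  Dt *m u + Dxt *m r = - (c *: u) - K *m (u - u0) ->
  qform ET u / 2 + c * qform M u + qform EB (u - u0) / 2
    = qform EB u0 / 2 - bform (M *m Dxt) u r.
Proof.
move=> /(congr1 (bform M u)).
rewrite bformDr bformBr bformNr !bformMr bformZr K_SAT bformBr => eq_u.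
have time_u : 2 * bform (M *m Dt) u u = qform ET u - qform EB u.
  by rewrite !qformE -bformBm -Dt_SBP bformDm bform_tr mulr2n mulrDl mul1r.
have sym_u : bform EB u0 u = bform EB u u0 by rewrite -bform_tr EB_sym.
rewrite !qformE bformBl !bformBr sym_u in time_u *.
lra.
Qed.

Lemma energy_estimate c u u0 r : 0 <= c ->
  Dt *m u + Dxt *m r = - (c *: u) - K *m (u - u0) ->
  qform ET u / 2 <= qform EB u0 / 2 - bform (M *m Dxt) u r.
Proof.
move=> c_ge0 /energy_identity <-.
have := mulr_ge0 c_ge0 (M_ge0 u); have := EB_ge0 (u - u0); lra.
Qed.

Lemma energy_homogeneous_eq0 c u : 0 < c -> Dt *m u = - (c *: u) - K *m u -> u = 0.
Proof.
move=> c_gt0 eq_u; apply: M_definite.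
have /energy_identity : Dt *m u + Dxt *m 0 = - (c *: u) - K *m (u - 0).
  by rewrite mulmx0 addr0 subr0.
rewrite subr0 !qformE bform0l bform0r mul0r subr0 => energy_u.
have := ET_ge0 u; have := EB_ge0 u; have := mulr_ge0 (ltW c_gt0) (M_ge0 u).
rewrite !qformE => ? ? ?.
have /eqP : c * bform M u u = 0 by lra.
by rewrite mulf_eq0 (gt_eqF c_gt0) => /eqP.
Qed.

Context {nv : nat} {v w : 'I_nv -> R} {eps sigs siga : R}.
Context {rho0 rho : 'cV[R]_N} {g0 g : 'I_nv -> 'cV[R]_N}.
Hypotheses (w_ge0 : forall k, 0 <= w k) (w_sum1 : \sum_k w k = 1)
  (wv_sum0 : \sum_k w k * v k = 0) (g0_avg0 : vavg w g0 = 0).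
Hypotheses (eps_gt0 : 0 < eps) (sigs_gt0 : 0 < sigs) (siga_ge0 : 0 <= siga).

Local Notation V := (vavg w (fun k => v k *: g k)).
Local Notation S := (M *m Dxt).
Local Notation damping := (sigs / eps ^+ 2 + siga).

Hypothesis eq_rho : Dt *m rho + Dxt *m V = - (siga *: rho) - K *m (rho - rho0).
Hypothesis eq_g : forall k,
  Dt *m g k + (v k / eps) *: (Dxt *m g k) - (1 / eps) *: vavg w (fun j => v j *: (Dxt *m g j))
  + (v k / eps ^+ 2) *: (Dxt *m rho) = - (damping *: g k) - K *m (g k - g0 k).

Let transport k := (v k / eps) *: g k - (1 / eps) *: V + (v k / eps ^+ 2) *: rho.

Let damping_gt0 : 0 < damping.
Proof. by rewrite ltr_wpDr // divr_gt0 // exprn_gt0. Qed.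

Lemma eq_g_transport k :
  Dt *m g k + Dxt *m transport k = - (damping *: g k) - K *m (g k - g0 k).
Proof.
rewrite -eq_g /transport mulmxDr mulmxBr -!scalemxAr -vavg_mulmx !addrA.
by congr (_ + - (_ *: _) + _); apply: eq_bigr => j _; rewrite -scalemxAr.
Qed.

Lemma vavg_transport : vavg w transport = 0.
Proof.
have avg_gk : vavg w (fun k => (v k / eps) *: g k) = (1 / eps) *: V.
  rewrite -vavgZ /vavg; apply: eq_bigr => k _.
  by rewrite !scalerA; congr (_ *: _); ring.
rewrite vavgD vavgB avg_gk !vavg_scale -mulr_suml w_sum1 [1 * (1 / eps)]mul1r subrr add0r.
under eq_bigr do rewrite mulrA.
by rewrite -mulr_suml wv_sum0 mul0r scale0r.
Qed.

Lemma vavg_g_eq0 : vavg w g = 0.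
Proof.
apply: (energy_homogeneous_eq0 damping_gt0).
have : vavg w (fun k => Dt *m g k + Dxt *m transport k)
       = vavg w (fun k => - (damping *: g k) - K *m (g k - g0 k)).
  by apply: eq_bigr => k _; rewrite eq_g_transport.
by rewrite vavgD vavgB vavgN vavgZ !vavg_mulmx vavgB vavg_transport g0_avg0 mulmx0 addr0 subr0.
Qed.

Lemma rho_energy : qform ET rho / 2 <= qform EB rho0 / 2 + bform S V rho.
Proof. by have := energy_estimate siga_ge0 eq_rho; rewrite (bform_skew _ _ Dxt_skew) opprK. Qed.

Lemma transport_energy :
  \sum_k w k * bform S (g k) (transport k) = bform S V rho / eps ^+ 2.
Proof.
transitivity (\sum_k (w k * bform S (v k *: g k) rho / eps ^+ 2 - w k * bform S (g k) V / eps)).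
  apply: eq_bigr => k _.
  have skew_gk : bform S (g k) (g k) = 0 by have := bform_skew (g k) (g k) Dxt_skew; lra.
  by rewrite /transport bformDr bformBr !bformZr bformZl skew_gk; ring.
by rewrite sumrB -!mulr_suml -!bform_vavgl vavg_g_eq0 bform0l mul0r subr0.
Qed.

Lemma g_energy : eps ^+ 2 / 2 * \sum_k w k * qform ET (g k)
  <= eps ^+ 2 / 2 * \sum_k w k * qform EB (g0 k) - bform S V rho.
Proof.
have energy_gk k : w k * qform ET (g k)
    <= w k * qform EB (g0 k) - 2 * (w k * bform S (g k) (transport k)).
  have := ler_wpM2l (w_ge0 k) (energy_estimate (ltW damping_gt0) (eq_g_transport k)); lra.
have : \sum_k w k * qform ET (g k)
    <= \sum_k (w k * qform EB (g0 k) - 2 * (w k * bform S (g k) (transport k))).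
  by apply: ler_sum => k _; apply: energy_gk.
rewrite sumrB -mulr_sumr transport_energy.
have eps2_ge0 : 0 <= eps ^+ 2 / 2 by rewrite divr_ge0 ?exprn_ge0 ?ltW.
move/(ler_wpM2l eps2_ge0).
have : eps ^+ 2 / 2 * (2 * (bform S V rho / eps ^+ 2)) = bform S V rho.
  by field; apply: lt0r_neq0.
move=> cancel_eps sum_energy; lra.
Qed.

Theorem kinetic_energy_stable :
  1 / 2 * qform ET rho + eps ^+ 2 / 2 * \sum_k w k * qform ET (g k)
  <= 1 / 2 * qform EB rho0 + eps ^+ 2 / 2 * \sum_k w k * qform EB (g0 k).
Proof. by have := rho_energy; have := g_energy; lra. Qed.

End EnergyMethod.

Theorem theorem3p4 (R : realFieldType) (nx nt px pt nv : nat)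
  (xs : 'cV[R]_nx.+1) (Dxb Hxb Qxb : 'M[R]_nx.+1)
  (ts : 'cV[R]_nt.+1) (Dtb Htb Qtb : 'M[R]_nt.+1)
  (v w : 'I_nv -> R) (eps sigs siga : R)
  (rho0 rho : 'cV[R]_(nt.+1 * nx.+1)) (g0 g : 'I_nv -> 'cV[R]_(nt.+1 * nx.+1)) :
  is_SBP px xs Dxb Hxb Qxb ->
  is_SBP pt ts Dtb Htb Qtb ->
  (forall k, 0 < w k) ->
  \sum_(k < nv) w k = 1 ->
  \sum_(k < nv) w k * v k = 0 ->
  0 < eps -> 0 < sigs -> 0 <= siga ->
  vavg w g0 = 0 ->
  let Ix : 'M[R]_nx.+1 := 1%:M in
  let It : 'M[R]_nt.+1 := 1%:M in
  let Dt := Dtb *t Ix in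
  let Dx := It *t Dxb in
  let Ht := Htb *t Ix in
  let Hx := It *t Hxb in
  let tR := It *t tlast R nx in
  let tL := It *t tfirst R nx in
  let tB := tfirst R nt *t Ix in
  let Dxt := Dx - (1 / 2) *: (invmx Hx *m
               (tR *m (tR^T - tL^T) - tL *m (tL^T - tR^T))) in
  Dt *m rho + Dxt *m vavg w (fun k => v k *: g k)
    = - (siga *: rho) - invmx Ht *m (tB *m tB^T) *m (rho - rho0) ->
  (forall k : 'I_nv,
     Dt *m g k + (v k / eps) *: (Dxt *m g k)
     - (1 / eps) *: vavg w (fun j => v j *: (Dxt *m g j))
     + (v k / eps ^+ 2) *: (Dxt *m rho)
     = - ((sigs / eps ^+ 2 + siga) *: g k) - invmx Ht *m (tB *m tB^T) *m (g k - g0 k)) ->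
  let ET := (tlast R nt *m (tlast R nt)^T) *t Hxb in
  let EB := (tfirst R nt *m (tfirst R nt)^T) *t Hxb in
  (1 / 2) * qform ET rho + (eps ^+ 2 / 2) * \sum_(k < nv) w k * qform ET (g k)
  <= (1 / 2) * qform EB rho0 + (eps ^+ 2 / 2) * \sum_(k < nv) w k * qform EB (g0 k).
Proof.
move=> sbpx sbpt w_gt0 w_sum1 wv_sum0 eps_gt0 sigs_gt0 siga_ge0 g0_avg0.
move=> Ix It Dt Dx Ht Hx tR tL tB Dxt eq_rho eq_g; cbv zeta.
set ET := (tlast R nt *m _ *t Hxb); set EB := (tfirst R nt *m _ *t Hxb).
have [_ _ Hx_pos Dx_def Qx_bnd] := sbpx; have [_ _ Ht_pos Dt_def Qt_bnd] := sbpt.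
have Hx_sym := diag_trmx (proj1 Hx_pos); have Ht_sym := diag_trmx (proj1 Ht_pos).
pose M := Htb *t Hxb.
have M_pos : pos_diag M by apply: tensmx_pos_diag.
have ET_nonneg : nonneg_diag ET.
  rewrite /ET tlast_outer.
  exact: tensmx_nonneg_diag (nonneg_diag_delta R _) (pos_diag_nonneg Hx_pos).
have EB_nonneg : nonneg_diag EB.
  rewrite /EB tfirst_outer.
  exact: tensmx_nonneg_diag (nonneg_diag_delta R _) (pos_diag_nonneg Hx_pos).
have Dt_SBP : M *m Dt + (M *m Dt)^T = ET - EB.
  by rewrite (tensmx_time_SBP (pos_diag_unitmx Ht_pos) Dt_def Hx_sym) Qt_bnd tensmxBl.
have K_SAT : M *m (invmx Ht *m (tB *m tB^T)) = EB by exact/tensmx_time_SAT/pos_diag_unitmx.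
have Dxt_skew : (M *m Dxt)^T = - (M *m Dxt).
  rewrite (tensmx_periodic_Dx _ _ _ (pos_diag_unitmx Hx_pos) Dx_def).
  by rewrite tensmx_skew // periodicQ_skew.
exact: (kinetic_energy_stable Dt_SBP K_SAT (diag_trmx (proj1 EB_nonneg)) Dxt_skew
  (nonneg_diag_qform_ge0 (pos_diag_nonneg M_pos)) (pos_diag_qform_eq0 M_pos)
  (nonneg_diag_qform_ge0 ET_nonneg) (nonneg_diag_qform_ge0 EB_nonneg)
  (fun k => ltW (w_gt0 k)) w_sum1 wv_sum0 g0_avg0 eps_gt0 sigs_gt0 siga_ge0 eq_rho eq_g).
Qed.
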